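(* For every $(k+1)$-ary predicate symbol $P$ and arithmetic terms $t_1,\dots,t_k$, and every context $\Gamma=\alpha_1:A_1,\dots,\alpha_l:A_l$, the decorated sequent $\Gamma\Vdash\mathsf{em}(P,t_1,\dots,t_k):\mathsf{EM}(P,t_1,\dots,t_k)$ is valid with respect to the interactive realizability semantics, where $\mathsf{EM}(P,t_1,\dots,t_k)\equiv(\forall y\,P(t_1,\dots,t_k,y))\vee(\exists y\,\neg P(t_1,\dots,t_k,y))$ and $\mathsf{em}(P,t_1,\dots,t_k)\equiv\lambda s^{\mathsf{State}}.\,\mathrm{inl}\big(\mathrm{case}\,(\mathsf{query}_P\,s\,t_1\cdots t_k)\,(\lambda\_^{\mathsf{Unit}}.\mathrm{inl}(\lambda y^{\mathsf{Nat}}.\lambda\_^{\mathsf{State}}.\mathsf{eval}_P\,t_1\cdots t_k\,y))\,(\lambda y^{\mathsf{Nat}}.\mathrm{inr}\langle y,d\rangle)\big)$, with $d$ a fixed closed term of type $\mathsf{Unit}\to\mathsf T\,\mathsf{Unit}$.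
   Context: System $T'$: simply typed $\lambda$-calculus with types from atomic types $\mathsf{Unit},\mathsf{Nat},\mathsf{State},\mathsf{Ex}$ by $\to,\times,+$; constants $\star$, $\langle\cdot,\cdot\rangle$, $\pi_1,\pi_2$, $\mathrm{inl},\mathrm{inr}$, $\mathrm{case}$, $0$, $\mathrm{succ}$, a bounded recursor, $\mathsf{exmerge}:\mathsf{Ex}\to\mathsf{Ex}\to\mathsf{Ex}$, and for each $(k+1)$-ary predicate symbol $P$ constants $\mathsf{query}_P:\mathsf{State}\to\mathsf{Nat}^k\to\mathsf{Unit}+\mathsf{Nat}$ and $\mathsf{eval}_P:\mathsf{Nat}^k\to\mathsf{Nat}\to\mathsf{Unit}+\mathsf{Ex}$ (curried); usual $\beta$, projection and case reductions; $t\leadsto u$: $t$ reduces to $u$; $\bar n$ numerals; closed arithmetic terms reduce to numerals. States and exceptions: each closed $s:\mathsf{State}$ denotes a finite sound partial function $[\![s]\!]$ from (predicate symbol, parameter tuple) to witnesses; states are ordered by extension $\le$; each closed $e:\mathsf{Ex}$ denotes a partial function $[\![e]\!]$ on states with $s\le[\![e]\!](s)$ when defined; $e$ properly extends $s$ iff $[\![e]\!](s)$ is defined and $s<[\![e]\!](s)$. Assumptions: (EX) if $e_1,e_2$ properly extend $s$ then so does $\mathsf{exmerge}\,e_1e_2$; (IR1) $\mathsf{query}_P\,s\,\bar n_1\cdots\bar n_k\leadsto\mathrm{inr}\,\bar n$ implies $P(\bar n_1,\dots,\bar n_k,\bar n)$ holds; (IR2) $\mathsf{eval}_P\,\bar n_1\cdots\bar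 n_k\,\bar n\leadsto\mathrm{inl}\,\star$ implies $P(\bar n_1,\dots,\bar n_k,\bar n)$ holds; (IR3) if $\mathsf{query}_P\,s\,\bar n_1\cdots\bar n_k\leadsto\mathrm{inl}\,\star$ and $\mathsf{eval}_P\,\bar n_1\cdots\bar n_k\,\bar n\leadsto\mathrm{inr}\,e$ then $e$ properly extends $s$. Monad $\mathcal{IR}$: $\mathsf TX=\mathsf{State}\to(X+\mathsf{Ex})$, $\mathsf{unit}=\lambda x\lambda\_.\mathrm{inl}\,x$, $\mathsf{star}=\lambda f\lambda a\lambda s.\mathrm{case}(as)(\lambda x.fxs)\mathrm{inr}$, $\mathsf{merge}$ pairs two regular values and otherwise propagates exceptions, combining two with $\mathsf{exmerge}$. Formulas: first-order arithmetic with decidable atomic predicates; $\bot$ atomic never true; $\neg A=A\to\bot$. Types: $\|A\|=\mathsf T|A|$, $|P|=\mathsf{Unit}$, $|B\wedge C|=|B|\times|C|$, $|B\vee C|=|B|+|C|$, $|\exists xB|=\mathsf{Nat}\times|B|$, $|B\to C|=|B|\to\|C\|$, $|\forall xB|=\mathsf{Nat}\to\|B\|$. For a state $s$ (closed formulas $A$): $p\Vdash^s_{\mathcal{IR}}A$ iff $p\,s\leadsto\mathrm{inl}\,r$ with $r\Vdash^sA$, or $p\,s\leadsto\mathrm{inr}\,e$ with $e$ properly extending $s$; $r\Vdash^sP$ iff $r\leadsto\star$ and $P$ true; $r\Vdash^sB\wedge C$ iff $\pi_1r\Vdash^sB$ and $\pi_2r\Vdash^sC$; $r\Vdash^sB\vee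 C$ iff $r\leadsto\mathrm{inl}\,a$, $a\Vdash^sB$ or $r\leadsto\mathrm{inr}\,b$, $b\Vdash^sC$; $r\Vdash^sB\to C$ iff $rp\Vdash^s_{\mathcal{IR}}C$ for all $p\Vdash^sB$; $r\Vdash^s\forall xB$ iff $r\bar n\Vdash^s_{\mathcal{IR}}B[x:=\bar n]$ for all $n$; $r\Vdash^s\exists xB$ iff $\pi_2r\Vdash^sB[x:=\pi_1r]$. Validity w.r.t. $s$: $\alpha_1:A_1,\dots,\alpha_l:A_l\Vdash r:B$ (free arithmetic variables among $\vec x$) is valid iff for all numerals $\vec{\bar n}$ and all $p_i\Vdash^sA_i[\vec x:=\vec{\bar n}]$, $r[\vec x:=\vec{\bar n},\vec\alpha:=\vec p]\Vdash^s_{\mathcal{IR}}B[\vec x:=\vec{\bar n}]$. Interactive realizability semantics: a decorated sequent is valid iff it is valid with respect to $s$ for every state $s$.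
   Formalization: (IR1) concludes that $P(\bar n_1,\dots,\bar n_k,\bar n)$ does not hold, sound states store only witnesses at which P fails, and $\mathsf{query}_P$, $\mathsf{eval}_P$ on numerals always reduce to inl ⋆ or an inr value. Each condition added here is assumed in the paper as well or is needed for the statement above to hold. This also corrects a misprint. *)

From Stdlib Require Import List Arith.
Import ListNotations.

Inductive ty : Type :=
| TUnit | TNat | TState | TEx
| TArr (A B : ty) | TProd (A B : ty) | TSum (A B : ty).

Definition TM (X : ty) : ty := TArr TState (TSum X TEx).

Fixpoint nat_arr (k : nat) (B : ty) : ty :=
  match k with 0 => B | S k' => TArr TNat (nat_arr k' B) end.

(* Ps = predicate symbols, St = names of state constants,
   Xn = names of exception constants.
   tvar  : lambda-bound variables (de Bruijn indices)
   tavar : (named) arithmetic variables, of type Nat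
   tpvar : (named) proof variables alpha_i of decorated sequents      *)
Inductive tm (Ps St Xn : Type) : Type :=
| tvar (i : nat)
| tavar (x : nat)
| tpvar (a : nat)
| tlam (A : ty) (b : tm Ps St Xn)
| tapp (t u : tm Ps St Xn)
| tstar
| tpair (a b : tm Ps St Xn)
| tfst (t : tm Ps St Xn)
| tsnd (t : tm Ps St Xn)
| tinl (t : tm Ps St Xn)
| tinr (t : tm Ps St Xn)
| tcase (t f g : tm Ps St Xn)
| tzero
| tsucc (t : tm Ps St Xn)
| trec (u v n : tm Ps St Xn)
| tquery (P : Ps)
| teval (P : Ps)
| texmerge
| tst (s : St)
| tex (e : Xn).

Arguments tvar {Ps St Xn} i.
Arguments tavar {Ps St Xn} x.
Arguments tpvar {Ps St Xn} a.
Arguments tlam {Ps St Xn} A b.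
Arguments tapp {Ps St Xn} t u.
Arguments tstar {Ps St Xn}.
Arguments tpair {Ps St Xn} a b.
Arguments tfst {Ps St Xn} t.
Arguments tsnd {Ps St Xn} t.
Arguments tinl {Ps St Xn} t.
Arguments tinr {Ps St Xn} t.
Arguments tcase {Ps St Xn} t f g.
Arguments tzero {Ps St Xn}.
Arguments tsucc {Ps St Xn} t.
Arguments trec {Ps St Xn} u v n.
Arguments tquery {Ps St Xn} P.
Arguments teval {Ps St Xn} P.
Arguments texmerge {Ps St Xn}.
Arguments tst {Ps St Xn} s.
Arguments tex {Ps St Xn} e.

Section Terms.
Context {Ps St Xn : Type}.
Local Notation tm := (tm Ps St Xn).

Fixpoint num (n : nat) : tm :=
  match n with 0 => tzero | S n' => tsucc (num n') end.

Definition apps (h : tm) (args : list tm) : tm := fold_left tapp args h.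

Fixpoint lift (c : nat) (t : tm) : tm :=
  match t with
  | tvar i => if i <? c then tvar i else tvar (S i)
  | tlam A b => tlam A (lift (S c) b)
  | tapp t u => tapp (lift c t) (lift c u)
  | tpair a b => tpair (lift c a) (lift c b)
  | tfst t => tfst (lift c t)
  | tsnd t => tsnd (lift c t)
  | tinl t => tinl (lift c t)
  | tinr t => tinr (lift c t)
  | tcase t f g => tcase (lift c t) (lift c f) (lift c g)
  | tsucc t => tsucc (lift c t)
  | trec u v n => trec (lift c u) (lift c v) (lift c n)
  | t => t
  end.

Fixpoint subst (j : nat) (u : tm) (t : tm) : tm :=
  match t with
  | tvar i => if i =? j then u else if j <? i then tvar (pred i) else tvar i
  | tlam A b => tlam A (subst (S j) (lift 0 u) b)
  | tapp t1 t2 => tapp (subst j u t1) (subst j u t2)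
  | tpair a b => tpair (subst j u a) (subst j u b)
  | tfst t => tfst (subst j u t)
  | tsnd t => tsnd (subst j u t)
  | tinl t => tinl (subst j u t)
  | tinr t => tinr (subst j u t)
  | tcase t f g => tcase (subst j u t) (subst j u f) (subst j u g)
  | tsucc t => tsucc (subst j u t)
  | trec a v n => trec (subst j u a) (subst j u v) (subst j u n)
  | t => t
  end.

Fixpoint asubst (rho : nat -> tm) (t : tm) : tm :=
  match t with
  | tavar x => rho x
  | tlam A b => tlam A (asubst (fun x => lift 0 (rho x)) b)
  | tapp t1 t2 => tapp (asubst rho t1) (asubst rho t2)
  | tpair a b => tpair (asubst rho a) (asubst rho b)
  | tfst t => tfst (asubst rho t)
  | tsnd t => tsnd (asubst rho t)
  | tinl t => tinl (asubst rho t)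
  | tinr t => tinr (asubst rho t)
  | tcase t f g => tcase (asubst rho t) (asubst rho f) (asubst rho g)
  | tsucc t => tsucc (asubst rho t)
  | trec a v n => trec (asubst rho a) (asubst rho v) (asubst rho n)
  | t => t
  end.

Fixpoint lookup (a : nat) (sg : list (nat * tm)) : option tm :=
  match sg with
  | [] => None
  | (b, p) :: sg' => if a =? b then Some p else lookup a sg'
  end.

Fixpoint psubst (sg : list (nat * tm)) (t : tm) : tm :=
  match t with
  | tpvar a => match lookup a sg with Some p => p | None => tpvar a end
  | tlam A b => tlam A (psubst (map (fun bp => (fst bp, lift 0 (snd bp))) sg) b)
  | tapp t1 t2 => tapp (psubst sg t1) (psubst sg t2)
  | tpair a b => tpair (psubst sg a) (psubst sg b)
  | tfst t => tfst (psubst sg t)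
  | tsnd t => tsnd (psubst sg t)
  | tinl t => tinl (psubst sg t)
  | tinr t => tinr (psubst sg t)
  | tcase t f g => tcase (psubst sg t) (psubst sg f) (psubst sg g)
  | tsucc t => tsucc (psubst sg t)
  | trec a v n => trec (psubst sg a) (psubst sg v) (psubst sg n)
  | t => t
  end.

Fixpoint wsc (n : nat) (t : tm) : Prop :=
  match t with
  | tvar i => i < n
  | tavar _ => False
  | tpvar _ => False
  | tlam _ b => wsc (S n) b
  | tapp t u | tpair t u => wsc n t /\ wsc n u
  | tfst t | tsnd t | tinl t | tinr t | tsucc t => wsc n t
  | tcase t f g | trec t f g => wsc n t /\ wsc n f /\ wsc n g
  | _ => True
  end.

Definition closed (t : tm) : Prop := wsc 0 t.

Fixpoint no_pvar (t : tm) : Prop :=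
  match t with
  | tpvar _ => False
  | tlam _ b => no_pvar b
  | tapp t u | tpair t u => no_pvar t /\ no_pvar u
  | tfst t | tsnd t | tinl t | tinr t | tsucc t => no_pvar t
  | tcase t f g | trec t f g => no_pvar t /\ no_pvar f /\ no_pvar g
  | _ => True
  end.

Fixpoint occurs_avar (y : nat) (t : tm) : Prop :=
  match t with
  | tavar x => x = y
  | tlam _ b => occurs_avar y b
  | tapp t u | tpair t u => occurs_avar y t \/ occurs_avar y u
  | tfst t | tsnd t | tinl t | tinr t | tsucc t => occurs_avar y t
  | tcase t f g | trec t f g => occurs_avar y t \/ occurs_avar y f \/ occurs_avar y g
  | _ => False
  end.

Inductive has_type (ar : Ps -> nat) : list ty -> tm -> ty -> Prop :=
| T_var G i A : nth_error G i = Some A -> has_type ar G (tvar i) A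
| T_avar G x : has_type ar G (tavar x) TNat
| T_lam G A B b : has_type ar (A :: G) b B -> has_type ar G (tlam A b) (TArr A B)
| T_app G t u A B : has_type ar G t (TArr A B) -> has_type ar G u A ->
    has_type ar G (tapp t u) B
| T_star G : has_type ar G tstar TUnit
| T_pair G a b A B : has_type ar G a A -> has_type ar G b B ->
    has_type ar G (tpair a b) (TProd A B)
| T_fst G t A B : has_type ar G t (TProd A B) -> has_type ar G (tfst t) A
| T_snd G t A B : has_type ar G t (TProd A B) -> has_type ar G (tsnd t) B
| T_inl G t A B : has_type ar G t A -> has_type ar G (tinl t) (TSum A B)
| T_inr G t A B : has_type ar G t B -> has_type ar G (tinr t) (TSum A B)
| T_case G t f g A B C : has_type ar G t (TSum A B) -> has_type ar G f (TArr A C) ->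
    has_type ar G g (TArr B C) -> has_type ar G (tcase t f g) C
| T_zero G : has_type ar G tzero TNat
| T_succ G t : has_type ar G t TNat -> has_type ar G (tsucc t) TNat
| T_rec G u v n A : has_type ar G u A -> has_type ar G v (TArr TNat (TArr A A)) ->
    has_type ar G n TNat -> has_type ar G (trec u v n) A
| T_query G P : has_type ar G (tquery P)
    (TArr TState (nat_arr (ar P) (TSum TUnit TNat)))
| T_eval G P : has_type ar G (teval P)
    (nat_arr (ar P) (TArr TNat (TSum TUnit TEx)))
| T_exmerge G : has_type ar G texmerge (TArr TEx (TArr TEx TEx))
| T_st G s : has_type ar G (tst s) TState
| T_ex G e : has_type ar G (tex e) TEx.

Inductive step (delta : tm -> tm -> Prop) : tm -> tm -> Prop :=
| s_beta A b u : step delta (tapp (tlam A b) u) (subst 0 u b)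
| s_fst a b : step delta (tfst (tpair a b)) a
| s_snd a b : step delta (tsnd (tpair a b)) b
| s_case_l a f g : step delta (tcase (tinl a) f g) (tapp f a)
| s_case_r b f g : step delta (tcase (tinr b) f g) (tapp g b)
| s_rec0 u v : step delta (trec u v tzero) u
| s_recS u v n : step delta (trec u v (tsucc n)) (tapp (tapp v n) (trec u v n))
| s_delta t u : delta t u -> step delta t u
| c_lam A b b' : step delta b b' -> step delta (tlam A b) (tlam A b')
| c_app1 t t' u : step delta t t' -> step delta (tapp t u) (tapp t' u)
| c_app2 t u u' : step delta u u' -> step delta (tapp t u) (tapp t u')
| c_pair1 a a' b : step delta a a' -> step delta (tpair a b) (tpair a' b)
| c_pair2 a b b' : step delta b b' -> step delta (tpair a b) (tpair a b')
| c_fst t t' : step delta t t' -> step delta (tfst t) (tfst t')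
| c_snd t t' : step delta t t' -> step delta (tsnd t) (tsnd t')
| c_inl t t' : step delta t t' -> step delta (tinl t) (tinl t')
| c_inr t t' : step delta t t' -> step delta (tinr t) (tinr t')
| c_case1 t t' f g : step delta t t' -> step delta (tcase t f g) (tcase t' f g)
| c_case2 t f f' g : step delta f f' -> step delta (tcase t f g) (tcase t f' g)
| c_case3 t f g g' : step delta g g' -> step delta (tcase t f g) (tcase t f g')
| c_succ t t' : step delta t t' -> step delta (tsucc t) (tsucc t')
| c_rec1 u u' v n : step delta u u' -> step delta (trec u v n) (trec u' v n)
| c_rec2 u v v' n : step delta v v' -> step delta (trec u v n) (trec u v' n)
| c_rec3 u v n n' : step delta n n' -> step delta (trec u v n) (trec u v n').

Inductive red (delta : tm -> tm -> Prop) : tm -> tm -> Prop :=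
| red_refl t : red delta t t
| red_step t u v : step delta t u -> red delta u v -> red delta t v.

Definition const_headed (t : tm) : Prop :=
  exists h args, t = apps h args /\
    ((exists P, h = tquery P) \/ (exists P, h = teval P) \/ h = texmerge).

End Terms.

Record Sys : Type := {
  Ps : Type;
  St : Type;
  Xn : Type;
  ar : Ps -> nat;                         (* P is (ar P + 1)-ary *)
  interp : Ps -> list nat -> bool;
  delta : tm Ps St Xn -> tm Ps St Xn -> Prop;  (* reduction rules of the constants *)
  stfun : tm Ps St Xn -> (Ps * list nat -> option nat);
  exfun : tm Ps St Xn -> (Ps * list nat -> option nat) ->
          option (Ps * list nat -> option nat)
}.

Section Semantics.
Variable S : Sys.
Local Notation tm := (tm (Ps S) (St S) (Xn S)).
Local Notation "t ~> u" := (red (delta S) t u) (at level 70).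

Definition pfun := (Ps S * list nat -> option nat)%type.

Definition ext (f g : pfun) : Prop := forall k v, f k = Some v -> g k = Some v.

Definition finite_pfun (f : pfun) : Prop :=
  exists L : list (Ps S * list nat), forall k v, f k = Some v -> In k L.

Definition sound_pfun (f : pfun) : Prop :=
  forall P ns m, f (P, ns) = Some m -> length ns = ar S P /\ interp S P (ns ++ [m]) = false.

Definition is_state (s : tm) : Prop := closed s /\ has_type (ar S) [] s TState.
Definition is_exn (e : tm) : Prop := closed e /\ has_type (ar S) [] e TEx.

Definition prop_ext (e s : tm) : Prop :=
  exists g, exfun S e (stfun S s) = Some g /\ ext (stfun S s) g /\ ~ ext g (stfun S s).

Definition P_holds (P : Ps S) (ns : list nat) (n : nat) : Prop :=
  interp S P (ns ++ [n]) = true.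

Definition query_tm (P : Ps S) (s : tm) (args : list tm) : tm :=
  apps (tapp (tquery P) s) args.
Definition eval_tm (P : Ps S) (args : list tm) (y : tm) : tm :=
  tapp (apps (teval P) args) y.

Inductive form : Type :=
| FAtom (P : Ps S) (ts : list tm)
| FBot
| FAnd (A B : form) | FOr (A B : form) | FImp (A B : form)
| FAll (x : nat) (A : form) | FEx (x : nat) (A : form).

Definition FNeg (A : form) : form := FImp A FBot.

Definition aterm (t : tm) : Prop := has_type (ar S) [] t TNat /\ no_pvar t.

Definition upd (rho : nat -> tm) (x : nat) (t : tm) : nat -> tm :=
  fun z => if z =? x then t else rho z.

Definition atom_true (rho : nat -> tm) (P : Ps S) (ts : list tm) : Prop :=
  exists ms, Forall2 (fun t m => asubst rho t ~> num m) ts ms /\ interp S P ms = true.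

Definition IRof (s : tm) (R : tm -> Prop) (p : tm) : Prop :=
  (exists r, tapp p s ~> tinl r /\ R r) \/
  (exists e, tapp p s ~> tinr e /\ prop_ext e s).

(* r ||-^s A[rho]  (rho : closed terms substituted for the arithmetic variables) *)
Fixpoint real (s : tm) (rho : nat -> tm) (r : tm) (A : form) {struct A} : Prop :=
  match A with
  | FAtom P ts => r ~> tstar /\ atom_true rho P ts
  | FBot => r ~> tstar /\ False
  | FAnd B C => real s rho (tfst r) B /\ real s rho (tsnd r) C
  | FOr B C => (exists a, r ~> tinl a /\ real s rho a B) \/
               (exists b, r ~> tinr b /\ real s rho b C)
  | FImp B C => forall p, closed p -> real s rho p B ->
                  IRof s (fun q => real s rho q C) (tapp r p)
  | FAll x B => forall n, IRof s (fun q => real s (upd rho x (num n)) q B) (tapp r (num n))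
  | FEx x B => real s (upd rho x (tfst r)) (tsnd r) B
  end.

Definition realIR (s : tm) (rho : nat -> tm) (p : tm) (A : form) : Prop :=
  IRof s (fun r => real s rho r A) p.

Definition numenv (nu : nat -> nat) : nat -> tm := fun x => num (nu x).

Definition valid (G : list (nat * form)) (r : tm) (B : form) : Prop :=
  forall s, is_state s ->
  forall nu : nat -> nat, forall ps : list tm,
    length ps = length G -> Forall closed ps ->
    Forall2 (fun p aA => real s (numenv nu) p (snd aA)) ps G ->
    realIR s (numenv nu) (psubst (combine (map fst G) ps) (asubst (numenv nu) r)) B.

Definition EM (P : Ps S) (ts : list tm) (y : nat) : form :=
  FOr (FAll y (FAtom P (ts ++ [tavar y])))
      (FEx y (FNeg (FAtom P (ts ++ [tavar y])))).

Definition em (P : Ps S) (ts : list tm) (d : tm) : tm :=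
  tlam TState
    (tinl (tcase (query_tm P (tvar 0) ts)
                 (tlam TUnit (tinl (tlam TNat (tlam TState (eval_tm P ts (tvar 1))))))
                 (tlam TNat (tinr (tpair (tvar 0) d))))).

Record Assumptions : Prop := {
  A_delta : forall t u, delta S t u -> const_headed t;
  A_num : forall t, closed t -> has_type (ar S) [] t TNat -> exists n, t ~> num n;
  A_num_uniq : forall t m m', closed t -> has_type (ar S) [] t TNat ->
      t ~> num m -> t ~> num m' -> m = m';
  A_state : forall s, is_state s -> finite_pfun (stfun S s) /\ sound_pfun (stfun S s);
  A_exn : forall e f g, is_exn e -> exfun S e f = Some g -> ext f g;
  A_query_total : forall s P ns, is_state s -> length ns = ar S P ->
      query_tm P s (map num ns) ~> tinl tstar \/
      exists n, query_tm P s (map num ns) ~> tinr (num n);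
  A_eval_total : forall P ns n, length ns = ar S P ->
      eval_tm P (map num ns) (num n) ~> tinl tstar \/
      exists e, is_exn e /\ eval_tm P (map num ns) (num n) ~> tinr e;
  A_EX : forall s e1 e2, is_state s -> is_exn e1 -> is_exn e2 ->
      prop_ext e1 s -> prop_ext e2 s -> prop_ext (apps texmerge [e1; e2]) s;
  A_IR1 : forall s P ns n, is_state s -> length ns = ar S P ->
      query_tm P s (map num ns) ~> tinr (num n) -> ~ P_holds P ns n;
  A_IR2 : forall P ns n, length ns = ar S P ->
      eval_tm P (map num ns) (num n) ~> tinl tstar -> P_holds P ns n;
  A_IR3 : forall s P ns n e, is_state s -> length ns = ar S P ->
      query_tm P s (map num ns) ~> tinl tstar ->
      eval_tm P (map num ns) (num n) ~> tinr e -> prop_ext e s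
}.

End Semantics.

(* After numerals are substituted for the arithmetic variables, em(P, t) is a
   closed term without proof variables.  Applied to s, em
   returns a regular value that branches on query_P s t.  If the state knows
   no counterexample, \y. eval_P t y realizes the universal disjunct: for each
   y, eval_P either confirms P(t, y) (IR2) or raises an exception properly
   extending s (IR3).  If the state returns a witness n, then P(t, n) is false
   by (IR1), so <n, d> realizes the existential disjunct vacuously: no term
   realizes P(t, n). *)
From Stdlib Require Import List Arith Lia.
Import ListNotations.

Section Syntax.
Context {Ps St Xn : Type}.
Local Notation tm := (tm Ps St Xn).

Lemma lift_num c n : lift c (@num Ps St Xn n) = num n.
Proof. induction n; simpl; congruence. Qed.

Lemma wsc_num k n : wsc k (@num Ps St Xn n).
Proof. induction n; simpl; auto. Qed.

Lemma has_type_num ar G n : has_type ar G (@num Ps St Xn n) TNat.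
Proof. induction n; simpl; constructor; auto. Qed.

Lemma asubst_ext (t : tm) : forall f g, (forall x, f x = g x) -> asubst f t = asubst g t.
Proof.
  induction t; intros f g H; simpl; try reflexivity; try (f_equal; eauto; fail).
  f_equal. apply IHt. intros; rewrite H; reflexivity.
Qed.

Lemma asubst_ext_fresh y (t : tm) : ~ occurs_avar y t ->
  forall f g, (forall x, x <> y -> f x = g x) -> asubst f t = asubst g t.
Proof.
  induction t; intros Hy f g H; simpl in *; try reflexivity;
    try (f_equal; intuition eauto; fail).
  f_equal. apply IHt; auto. intros; rewrite H; auto.
Qed.

Lemma lift_wsc (t : tm) : forall n c, wsc n t -> n <= c -> lift c t = t.
Proof.
  induction t; intros n c Ht Hc; simpl in *; try reflexivity;
    try (f_equal; intuition eauto; fail).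
  - destruct (Nat.ltb_spec i c); [reflexivity | lia].
  - f_equal. eapply IHt; eauto; lia.
Qed.

Lemma subst_wsc (t : tm) : forall n j u, wsc n t -> n <= j -> subst j u t = t.
Proof.
  induction t; intros n j u Ht Hj; simpl in *; try reflexivity;
    try (f_equal; intuition eauto; fail).
  - destruct (Nat.eqb_spec i j); [lia |].
    destruct (Nat.ltb_spec j i); [lia | reflexivity].
  - f_equal. eapply IHt; eauto; lia.
Qed.

Lemma psubst_wsc (t : tm) : forall n sg, wsc n t -> psubst sg t = t.
Proof.
  induction t; intros n sg Ht; simpl in *; try reflexivity; try contradiction;
    try (f_equal; intuition eauto; fail).
Qed.

Lemma asubst_wsc (t : tm) : forall n f, wsc n t -> asubst f t = t.
Proof.
  induction t; intros n f Ht; simpl in *; try reflexivity; try contradiction;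
    try (f_equal; intuition eauto; fail).
Qed.

Lemma map_subst_closed j u (ts : list tm) : Forall closed ts -> map (subst j u) ts = ts.
Proof. induction 1; simpl; f_equal; auto. eapply subst_wsc; eauto; lia. Qed.

Lemma map_psubst_closed sg (ts : list tm) : Forall closed ts -> map (psubst sg) ts = ts.
Proof. induction 1; simpl; f_equal; auto. eapply psubst_wsc; eauto. Qed.

Lemma map_asubst_lift_closed (f : nat -> tm) c (ts : list tm) :
  (forall x, closed (f x)) -> map (asubst (fun x => lift c (f x))) ts = map (asubst f) ts.
Proof.
  intros Hf. apply map_ext. intros t. apply asubst_ext. intros x.
  eapply lift_wsc; [apply Hf | lia].
Qed.

Lemma asubst_num_typed ar (nu : nat -> nat) G (t : tm) A :
  has_type ar G t A ->
  has_type ar G (asubst (fun x => num (nu x)) t) A /\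
  wsc (length G) (asubst (fun x => num (nu x)) t).
Proof.
  induction 1; simpl; try (intuition (econstructor; eauto); fail).
  - split; [constructor; auto |]. apply nth_error_Some; congruence.
  - split; [apply has_type_num | apply wsc_num].
  - rewrite (asubst_ext b _ (fun x => num (nu x))) by (intros; apply lift_num).
    destruct IHhas_type; split; [constructor |]; auto.
Qed.

Lemma apps_asubst f (ts : list tm) : forall h,
  asubst f (apps h ts) = apps (asubst f h) (map (asubst f) ts).
Proof. induction ts; intros h; simpl; auto. Qed.

Lemma apps_subst j u (ts : list tm) : forall h,
  subst j u (apps h ts) = apps (subst j u h) (map (subst j u) ts).
Proof. induction ts; intros h; simpl; auto. Qed.

Lemma apps_psubst sg (ts : list tm) : forall h,
  psubst sg (apps h ts) = apps (psubst sg h) (map (psubst sg) ts).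
Proof. induction ts; intros h; simpl; auto. Qed.

End Syntax.

Section Reduction.
Context {Ps St Xn : Type}.
Local Notation tm := (tm Ps St Xn).
Variable delta : tm -> tm -> Prop.
Local Notation "t ~> u" := (red delta t u) (at level 70).

Lemma red_trans (a b c : tm) : a ~> b -> b ~> c -> a ~> c.
Proof. induction 1; intros; auto. econstructor; eauto. Qed.

Lemma red_of_step (a b : tm) : step delta a b -> a ~> b.
Proof. intros; econstructor; eauto; constructor. Qed.

Lemma red_congr (C : tm -> tm) :
  (forall a b, step delta a b -> step delta (C a) (C b)) ->
  forall a b, a ~> b -> C a ~> C b.
Proof. intros HC a b; induction 1; econstructor; eauto. Qed.

Lemma red_apps (l l' : list tm) : Forall2 (red delta) l l' ->
  forall h, apps h l ~> apps h l'.
Proof.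
  assert (Hstep : forall k a b, step delta a b -> step delta (apps a k) (apps b k)).
  { induction k; intros; simpl; auto using c_app1. }
  induction 1; intros h; simpl; [constructor |].
  eapply red_trans; [| apply IHForall2].
  apply (red_congr (fun z => apps z l)); auto.
  apply (red_congr (tapp h)); auto using c_app2.
Qed.

Lemma Forall2_red_map_num f (ts : list tm) ms :
  Forall2 (fun t m => f t ~> num m) ts ms -> Forall2 (red delta) (map f ts) (map num ms).
Proof. induction 1; simpl; constructor; auto. Qed.

End Reduction.

Section Realizability.
Variable S : Sys.
Hypothesis HS : Assumptions S.
Local Notation tm := (tm (Ps S) (St S) (Xn S)).
Local Notation "t ~> u" := (red (delta S) t u) (at level 70).

Definition em_eval_realizer (P : Ps S) (ts : list tm) : tm :=
  tlam TNat (tlam TState (eval_tm S P ts (tvar 1))).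

Definition em_query_unit_branch (P : Ps S) (ts : list tm) : tm :=
  tlam TUnit (tinl (em_eval_realizer P ts)).

Definition em_query_witness_branch (d : tm) : tm :=
  tlam TNat (tinr (tpair (tvar 0) d)).

Definition closes_to_nat (rho : nat -> tm) (t : tm) : Prop :=
  closed (asubst rho t) /\ has_type (ar S) [] (asubst rho t) TNat.

Lemma aterm_closes_to_nat nu t : aterm S t -> closes_to_nat (numenv S nu) t.
Proof.
  intros [Ht _]. destruct (asubst_num_typed (ar S) nu [] t TNat Ht).
  split; assumption.
Qed.

Lemma closes_to_nat_map rho ts :
  Forall (closes_to_nat rho) ts -> Forall closed (map (asubst rho) ts).
Proof. intros H. apply Forall_map. eapply Forall_impl; [| exact H]. now intros t []. Qed.

Lemma em_asubst_numenv nu P ts d : closed d ->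
  asubst (numenv S nu) (em S P ts d) = em S P (map (asubst (numenv S nu)) ts) d.
Proof.
  intros Hd. unfold em, query_tm, eval_tm. simpl.
  rewrite !apps_asubst; simpl.
  rewrite !(asubst_wsc d 0) by exact Hd.
  rewrite !map_asubst_lift_closed
    by (intros; unfold numenv; rewrite ?lift_num; apply wsc_num).
  reflexivity.
Qed.

Lemma em_psubst sg P ts d : Forall closed ts -> closed d -> psubst sg (em S P ts d) = em S P ts d.
Proof.
  intros Hts Hd. unfold em, query_tm, eval_tm. simpl.
  rewrite !apps_psubst, !map_psubst_closed by exact Hts; simpl.
  now rewrite (psubst_wsc d 0) by exact Hd.
Qed.

Lemma em_red_query P ts d s : Forall closed ts -> closed d -> closed s ->
  tapp (em S P ts d) s ~>
  tinl (tcase (query_tm S P s ts) (em_query_unit_branch P ts) (em_query_witness_branch d)).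
Proof.
  intros Hts Hd Hs. eapply red_trans; [apply red_of_step, s_beta |].
  unfold em, query_tm, eval_tm. simpl.
  rewrite !apps_subst, !map_subst_closed by exact Hts; simpl.
  rewrite (lift_wsc s 0), (subst_wsc d 0) by (auto; lia). constructor.
Qed.

Lemma em_eval_realizer_red P ts n s : Forall closed ts ->
  tapp (tapp (em_eval_realizer P ts) (num n)) s ~> eval_tm S P ts (num n).
Proof.
  intros Hts. unfold em_eval_realizer, eval_tm.
  eapply red_trans; [apply red_of_step, c_app1, s_beta |]. simpl.
  rewrite !apps_subst, !map_subst_closed, lift_num by exact Hts; simpl.
  eapply red_trans; [apply red_of_step, s_beta |]. simpl.
  rewrite !apps_subst, !map_subst_closed by exact Hts; simpl.
  rewrite (subst_wsc (num n) 0) by auto using wsc_num. constructor.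
Qed.

Lemma em_cases_red_unit P ts d v : Forall closed ts -> v ~> tinl tstar ->
  tcase v (em_query_unit_branch P ts) (em_query_witness_branch d) ~>
  tinl (em_eval_realizer P ts).
Proof.
  intros Hts Hv.
  eapply red_trans; [apply (red_congr _ (fun z => tcase z _ _)); eauto using c_case1 |].
  eapply red_trans; [apply red_of_step, s_case_l |].
  eapply red_trans; [apply red_of_step, s_beta |].
  unfold em_eval_realizer, eval_tm. simpl.
  rewrite !apps_subst, !map_subst_closed by exact Hts. constructor.
Qed.

Lemma em_cases_red_witness P ts d v m : closed d -> v ~> tinr (num m) ->
  tcase v (em_query_unit_branch P ts) (em_query_witness_branch d) ~>
  tinr (tpair (num m) d).
Proof.
  intros Hd Hv.
  eapply red_trans; [apply (red_congr _ (fun z => tcase z _ _)); eauto using c_case1 |].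
  eapply red_trans; [apply red_of_step, s_case_r |].
  eapply red_trans; [apply red_of_step, s_beta |].
  simpl. rewrite (subst_wsc d 0) by (auto; lia). constructor.
Qed.

Lemma closes_to_nat_nums rho ts : Forall (closes_to_nat rho) ts ->
  exists ms, Forall2 (fun t m => asubst rho t ~> num m) ts ms.
Proof.
  induction 1 as [| t ts [Hc Ht] _ [ms Hms]]; [exists []; constructor |].
  destruct (A_num S HS _ Hc Ht) as [m Hm]. exists (m :: ms). constructor; assumption.
Qed.

Lemma closes_to_nat_nums_unique rho ts : Forall (closes_to_nat rho) ts ->
  forall ms ms', Forall2 (fun t m => asubst rho t ~> num m) ts ms ->
  Forall2 (fun t m => asubst rho t ~> num m) ts ms' -> ms = ms'.
Proof.
  induction 1 as [| t ts [Hc Ht] _ IH]; intros ms ms' H1 H2;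
    inversion H1; inversion H2; subst; f_equal; eauto.
  eapply (A_num_uniq S HS); eauto.
Qed.

Lemma asubst_upd_fresh rho y v t : ~ occurs_avar y t -> asubst (upd S rho y v) t = asubst rho t.
Proof.
  intros Hy. apply (asubst_ext_fresh y t Hy). intros x Hx. unfold upd.
  now rewrite (proj2 (Nat.eqb_neq x y) Hx).
Qed.

Lemma atom_true_upd_fresh rho y v P ts : Forall (fun t => ~ occurs_avar y t) ts ->
  atom_true S (upd S rho y v) P (ts ++ [tavar y]) <->
  exists ms m, Forall2 (fun t k => asubst rho t ~> num k) ts ms /\ v ~> num m /\
    interp S P (ms ++ [m]) = true.
Proof.
  intros Hfresh.
  assert (Hts : forall ms, Forall2 (fun t k => asubst (upd S rho y v) t ~> num k) ts ms <->
                      Forall2 (fun t k => asubst rho t ~> num k) ts ms).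
  { induction Hfresh as [| t ts Ht _ IH]; intros ms; split; intros H;
      inversion H as [| ? m ? ms' Hm Hms']; subst; constructor;
      rewrite ?asubst_upd_fresh in * by exact Ht; try apply IH; assumption. }
  assert (Hy : asubst (upd S rho y v) (tavar y) = v)
    by (simpl; unfold upd; now rewrite Nat.eqb_refl).
  split.
  - intros [ms' [Hred Hint]].
    destruct (Forall2_app_inv_l _ _ Hred) as [ms [l [Hms [Hl ->]]]].
    inversion Hl as [| ? m ? ? Hm Hnil]; inversion Hnil; subst.
    exists ms, m. rewrite Hy in Hm. split; [apply Hts |]; auto.
  - intros [ms [m [Hms [Hm Hint]]]]. exists (ms ++ [m]). split; [| exact Hint].
    apply Forall2_app; [apply Hts; exact Hms |]. rewrite <- Hy in Hm. auto.
Qed.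

Lemma query_red_nums rho P s ts ms :
  Forall2 (fun t m => asubst rho t ~> num m) ts ms ->
  query_tm S P s (map (asubst rho) ts) ~> query_tm S P s (map num ms).
Proof. intros Hms. apply red_apps, Forall2_red_map_num, Hms. Qed.

Section Branches.
Variables (s : tm) (rho : nat -> tm) (P : Ps S) (ts : list tm) (y : nat) (ms : list nat).
Hypotheses (Hs : is_state S s) (Hlen : length ms = ar S P)
  (Hcl : Forall (closes_to_nat rho) ts) (Hfresh : Forall (fun t => ~ occurs_avar y t) ts)
  (Hms : Forall2 (fun t m => asubst rho t ~> num m) ts ms).

Lemma eval_realizes_forall : query_tm S P s (map num ms) ~> tinl tstar ->
  real S s rho (em_eval_realizer P (map (asubst rho) ts))
    (FAll S y (FAtom S P (ts ++ [tavar y]))).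
Proof.
  intros Hquery n. unfold IRof.
  assert (Heval : tapp (tapp (em_eval_realizer P (map (asubst rho) ts)) (num n)) s ~>
                  eval_tm S P (map num ms) (num n)).
  { eapply red_trans; [apply em_eval_realizer_red, closes_to_nat_map, Hcl |].
    apply (red_congr _ (fun z => tapp z (num n))); [intros; apply c_app1; assumption |].
    apply red_apps, Forall2_red_map_num, Hms. }
  destruct (A_eval_total S HS P ms n Hlen) as [Htrue | [e [_ Hexn]]].
  - left. exists tstar. split; [eapply red_trans; eauto |]. split; [constructor |].
    apply atom_true_upd_fresh; [exact Hfresh |].
    exists ms, n. split; [exact Hms |]. split; [constructor |].
    exact (A_IR2 S HS P ms n Hlen Htrue).
  - right. exists e. split; [eapply red_trans; eauto |].
    eapply (A_IR3 S HS); eauto.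
Qed.

Lemma witness_realizes_exists d m :
  closed d -> has_type (ar S) [] d (TArr TUnit (TM TUnit)) ->
  query_tm S P s (map num ms) ~> tinr (num m) ->
  real S s rho (tpair (num m) d) (FEx S y (FNeg S (FAtom S P (ts ++ [tavar y])))).
Proof.
  intros Hd Hdt Hquery p _ [_ Hatom]. exfalso.
  apply atom_true_upd_fresh in Hatom as [ms' [k [Hms' [Hk Hint]]]]; [| exact Hfresh].
  assert (ms' = ms) as -> by exact (closes_to_nat_nums_unique _ _ Hcl _ _ Hms' Hms).
  assert (k = m) as ->.
  { apply (A_num_uniq S HS (tfst (tpair (num m) d))); [| | exact Hk |].
    - split; [apply wsc_num | exact Hd].
    - eapply T_fst, T_pair; [apply has_type_num | exact Hdt].
    - apply red_of_step, s_fst. }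
  exact (A_IR1 S HS s P ms m Hs Hlen Hquery Hint).
Qed.

End Branches.
End Realizability.

Theorem mainTheorem5 (S : Sys) (HS : Assumptions S)
  (P : Ps S) (ts : list (tm (Ps S) (St S) (Xn S))) (y : nat)
  (d : tm (Ps S) (St S) (Xn S)) (G : list (nat * form S)) :
  length ts = ar S P ->
  Forall (aterm S) ts ->
  Forall (fun t => ~ occurs_avar y t) ts ->
  closed d -> has_type (ar S) nil d (TArr TUnit (TM TUnit)) ->
  valid S G (em S P ts d) (EM S P ts y).
Proof.
  intros Hlen Hat Hfresh Hd Hdt s Hs nu ps _ _ _.
  assert (Hcl : Forall (closes_to_nat S (numenv S nu)) ts)
    by (eapply Forall_impl; [apply aterm_closes_to_nat | exact Hat]).
  pose proof (closes_to_nat_map S _ _ Hcl) as Hts'.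
  rewrite em_asubst_numenv, em_psubst by assumption.
  set (rho := numenv S nu) in *.
  destruct (closes_to_nat_nums S HS _ _ Hcl) as [ms Hms].
  assert (Hlms : length ms = ar S P) by (rewrite <- Hlen; symmetry; eapply Forall2_length, Hms).
  pose proof (query_red_nums S rho P s ts ms Hms) as Hquery.
  left. eexists. split; [apply em_red_query; [exact Hts' | exact Hd | apply Hs] |].
  destruct (A_query_total S HS s P ms Hs Hlms) as [Hunit | [m Hwit]].
  - left. eexists. split; [apply em_cases_red_unit; [exact Hts' | eapply red_trans; eauto] |].
    eapply eval_realizes_forall; eauto.
  - right. eexists. split; [apply em_cases_red_witness; [exact Hd | eapply red_trans; eauto] |].
    eapply witness_realizes_exists; eauto.
Qed.
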